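(* Let $M$ be a finite-dimensional complex representation of a finite quiver $Q$ with ordered basis $\mathcal B$, $\underline e$ a dimension vector and $\beta\subseteq\mathcal B$ of type $\underline e$. If $\beta$ is not extremal successor closed, then the Schubert cell $C_\beta^M$ is empty.
   Context: $\mathcal B=\bigcup_p\mathcal B_p$ is a union of bases of the $M_p$, linearly ordered. $\beta$ is of type $\underline e$ if $|\beta\cap\mathcal B_p|=e_p$ for all $p$. $\mathrm{Gr}_{\underline e}(M)$ is the variety of subrepresentations of dimension vector $\underline e$. For $e$-subsets $I=\{i_1<\dots<i_e\}$, $J=\{j_1<\dots<j_e\}$, $I\le J$ means $i_l\le j_l$ for all $l$. $C_\beta^M$ is the set of $N\in\mathrm{Gr}_{\underline e}(M)$ such that for each $p$ the Plücker coordinates w.r.t. $\mathcal B_p$ satisfy $\Delta_{\beta_p}(N_p)\ne0$ and $\Delta_J(N_p)=0$ for all $J>\beta_p$, where $\beta_p=\beta\cap\mathcal B_p$. Coefficient quiver $T=\Gamma(M,\mathcal B)$: vertices $T_0=\mathcal B$; for $\bar\alpha\in Q_1$, $b\in\mathcal B_{s(\bar\alpha)}$, $c\in\mathcal B_{t(\bar\alpha)}$ there is an arrow $b\to c$ (of colour $\bar\alpha$) iff the coefficient of $c$ in $M_{\bar\alpha}(b)$ is nonzero; $F:T\to Q$ maps $b\in\mathcal B_p$ to $p$ and an arrow of colour $\bar\alpha$ to $\bar\alpha$. An arrow $\alpha:s\to t$ of $T$ is extremal if every other arrow $\alpha':s'\to t'$ of $T$ with $F(\alpha')=F(\alpha)$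 satisfies $s<s'$ or $t'<t$. A subset $\beta\subseteq T_0$ is extremal successor closed if for every extremal arrow $\alpha:s\to t$ of $T$, either $s\notin\beta$ or $t\in\beta$. *)

From HB Require Import structures.
From mathcomp Require Import all_boot all_order all_algebra.
Set Implicit Arguments. Unset Strict Implicit. Unset Printing Implicit Defensive.
Import GRing.Theory Num.Theory.
Local Open Scope ring_scope.

(* A finite quiver Q = (V, A, src, tgt); a representation M over a field K
   with M_p = K^(d p) (row vectors) and M_alpha : K^(d (src a)) -> K^(d (tgt a))
   given by right multiplication  x |-> x *m Mat a.
   The basis B_p is the standard basis of K^(d p); the total basis
   B = union of the B_p is the finite type  {p : V & 'I_(d p)}, linearly
   ordered by an injective rank function  rk : B -> nat. *)

Definition bvertices (V : finType) (d : V -> nat) : finType := {p : V & 'I_(d p)}.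

Definition bvec (V : finType) (d : V -> nat) (p : V) (i : 'I_(d p)) : bvertices d :=
  Tagged (fun q => 'I_(d q)) i.

Definition beta_at (V : finType) (d : V -> nat) (beta : {set bvertices d}) (p : V)
  : {set 'I_(d p)} := [set i | bvec i \in beta].

Definition of_type (V : finType) (d : V -> nat) (e : V -> nat)
  (beta : {set bvertices d}) : Prop :=
  forall p, #|beta_at beta p| = e p.

(* Plucker coordinate Delta_J(X) of the row space of X : 'M_(r, n)
   (rows of X form a basis), J an r-subset of column indices:
   the r x r minor of X on the columns J (0 if #|J| <> r). *)
Definition plucker (K : fieldType) (r n : nat) (X : 'M[K]_(r, n))
  (J : {set 'I_n}) : K :=
  match #|J| =P r with
  | ReflectT E =>
      \det (colsub (fun i : 'I_r => @enum_val _ (mem J) (cast_ord (esym E) i)) X)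
  | ReflectF _ => 0
  end.

Definition sorted_by (n : nat) (rk : 'I_n -> nat) (I : {set 'I_n}) : seq 'I_n :=
  sort (fun a b => rk a <= rk b)%N (enum I).

Definition subset_le (n : nat) (rk : 'I_n -> nat) (I J : {set 'I_n}) : bool :=
  (#|I| == #|J|) &&
  all2 (fun a b => rk a <= rk b)%N (sorted_by rk I) (sorted_by rk J).

Definition subset_lt (n : nat) (rk : 'I_n -> nat) (I J : {set 'I_n}) : bool :=
  subset_le rk I J && (I != J).

(* Subrepresentations of dimension vector e: N_p is the row space of the
   square matrix N p. *)
Definition in_Gr (K : fieldType) (V A : finType) (src tgt : A -> V)
  (d : V -> nat) (Mat : forall a : A, 'M[K]_(d (src a), d (tgt a)))
  (e : V -> nat) (N : forall p : V, 'M[K]_(d p)) : Prop :=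
  (forall a : A, (N (src a) *m Mat a <= N (tgt a))%MS) /\
  (forall p : V, \rank (N p) = e p).

Definition in_cell (K : fieldType) (V A : finType) (src tgt : A -> V)
  (d : V -> nat) (Mat : forall a : A, 'M[K]_(d (src a), d (tgt a)))
  (rk : bvertices d -> nat) (e : V -> nat) (beta : {set bvertices d})
  (N : forall p : V, 'M[K]_(d p)) : Prop :=
  in_Gr Mat e N /\
  forall p : V,
    plucker (row_base (N p)) (beta_at beta p) != 0 /\
    forall J : {set 'I_(d p)},
      #|J| = e p ->
      subset_lt (fun i => rk (bvec i)) (beta_at beta p) J ->
      plucker (row_base (N p)) J = 0.

(* Coefficient quiver: an arrow (bvec i) -> (bvec j) of colour a iff the
   coefficient of the j-th basis vector of M_(tgt a) in M_a(i-th basis vector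
   of M_(src a)) is nonzero, i.e. Mat a i j != 0. *)
Definition cq_arrow (K : fieldType) (V A : finType) (src tgt : A -> V)
  (d : V -> nat) (Mat : forall a : A, 'M[K]_(d (src a), d (tgt a)))
  (a : A) (i : 'I_(d (src a))) (j : 'I_(d (tgt a))) : bool :=
  Mat a i j != 0.
Arguments cq_arrow {K V A src tgt d} Mat a i j.

Definition extremal (K : fieldType) (V A : finType) (src tgt : A -> V)
  (d : V -> nat) (Mat : forall a : A, 'M[K]_(d (src a), d (tgt a)))
  (rk : bvertices d -> nat)
  (a : A) (i : 'I_(d (src a))) (j : 'I_(d (tgt a))) : Prop :=
  cq_arrow Mat a i j /\
  forall (i' : 'I_(d (src a))) (j' : 'I_(d (tgt a))),
    cq_arrow Mat a i' j' -> (i', j') <> (i, j) ->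
    (rk (bvec i) < rk (bvec i'))%N \/ (rk (bvec j') < rk (bvec j))%N.
Arguments extremal {K V A src tgt d} Mat rk a i j.

Definition ext_succ_closed (K : fieldType) (V A : finType) (src tgt : A -> V)
  (d : V -> nat) (Mat : forall a : A, 'M[K]_(d (src a), d (tgt a)))
  (rk : bvertices d -> nat) (beta : {set bvertices d}) : Prop :=
  forall (a : A) (i : 'I_(d (src a))) (j : 'I_(d (tgt a))),
    extremal Mat rk a i j -> bvec i \notin beta \/ bvec j \in beta.

From HB Require Import structures.
From mathcomp Require Import all_boot all_order all_algebra.
From mathcomp Require Import perm zify.
Set Implicit Arguments. Unset Strict Implicit. Unset Printing Implicit Defensive.
Import GRing.Theory.

(* Fix a vertex p and write X for a basis matrix of N_p, B = beta_p.  If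
   Delta_B(X) != 0 and Delta_J(X) = 0 for every J strictly above B in the
   Gale order, then X is row-equivalent to an "echelon" matrix Y whose
   columns B form the identity and whose row attached to b in B vanishes at
   every column t outside B with rk b < rk t: replacing b by t in B yields
   a subset strictly above B (Gale order), whose Plucker coordinate, equal
   to the entry Y_(b,t), must vanish.  Consequently
   (a) every b in B is the leading (largest-rank) column of some vector of N_p;
   (b) the leading column of any nonzero vector of N_p lies in B.
   Now let i -> j be an extremal arrow of colour a with i in beta.  Take v
   in N_(src a) with leading column i as in (a); extremality forces
   v * M_a to have leading column j, and v * M_a lies in N_(tgt a) since N
   is a subrepresentation, so j is in beta by (b). *)

Lemma all2_sorted_count (T : eqType) (R : T -> nat) (x0 : T) (u v : seq T) :
  sorted (fun a b => R a <= R b) u -> sorted (fun a b => R a <= R b) v ->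
  size u = size v ->
  (forall k, count (fun x => k <= R x) u <= count (fun x => k <= R x) v) ->
  all2 (fun a b => R a <= R b) u v.
Proof.
move=> sorted_u sorted_v size_uv count_uv.
have tr : transitive (fun a b => R a <= R b) by move=> a b c; exact: leq_trans.
have rf : reflexive (fun a b => R a <= R b) by [].
rewrite all2E size_uv eqxx /=; apply/(all_nthP (x0, x0)) => m.
rewrite size_zip -size_uv minnn => lt_m; rewrite nth_zip //=.
rewrite leqNgt; apply/negP => lt_vu.
pose p := fun x => R (nth x0 u m) <= R x.
(* the tail of u from position m lies in the upper set of u_m ... *)
have count_u : size u - m <= count p u.
  rewrite -(cat_take_drop m u) count_cat size_cat size_take size_drop lt_m.
  have : all p (drop m u).
    apply/(all_nthP x0) => i; rewrite size_drop => lt_i; rewrite nth_drop /p.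
    by apply: (sorted_leq_nth tr rf x0 sorted_u); rewrite ?inE /=; lia.
  rewrite all_count size_drop => /eqP ->; lia.
(* ... while the head of v up to position m avoids it *)
have count_v : count p v <= size v - m.+1.
  rewrite -(cat_take_drop m.+1 v) count_cat size_cat size_take size_drop.
  have : ~~ has p (take m.+1 v).
    apply/hasPn => x /(nthP x0) [i]; rewrite size_take => lt_i <-.
    have lt_im : i < m.+1 by move: lt_i; case: ifP => size_v; lia.
    rewrite nth_take // /p -ltnNge; apply: leq_ltn_trans lt_vu.
    by apply: (sorted_leq_nth tr rf x0 sorted_v); rewrite ?inE /=; lia.
  rewrite has_count -leqNgt leqn0 => /eqP ->.
  have := count_size p (drop m.+1 v); rewrite size_drop; case: ifP; lia.
have := count_uv (R (nth x0 u m)); rewrite -/p; lia.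
Qed.

Lemma count_sorted_by (n : nat) (R : 'I_n -> nat) (I : {set 'I_n})
    (p : pred 'I_n) :
  count p (sorted_by R I) = \sum_(i in I) p i.
Proof.
have sort_perm : perm_eq (sort (fun a b => R a <= R b) (enum I)) (enum I).
  by rewrite perm_sort.
rewrite /sorted_by (seq.permP sort_perm) -sum1_count big_enum_cond.
by rewrite big_mkcondr /=; apply: eq_bigr => i _; case: (p i).
Qed.

Lemma card_exchange (n : nat) (B : {set 'I_n}) (b t : 'I_n) :
  b \in B -> t \notin B -> #|t |: (B :\ b)| = #|B|.
Proof.
by move=> bB tB; rewrite cardsU1 in_setD1 (negbTE tB) andbF (cardsD1 b B) bB.
Qed.

Lemma exchange_gale_lt (n : nat) (R : 'I_n -> nat) (B : {set 'I_n}) (b t : 'I_n) :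
  b \in B -> t \notin B -> R b < R t -> subset_lt R B (t |: (B :\ b)).
Proof.
move=> bB tB lt_bt; have card_J := card_exchange bB tB.
rewrite /subset_lt /subset_le card_J eqxx /=; apply/andP; split; last first.
  by apply: contraNneq tB => ->; rewrite setU11.
have tot : total (fun a b => R a <= R b) by move=> x y; exact: leq_total.
apply: (all2_sorted_count b); rewrite ?sort_sorted //.
  by rewrite /sorted_by !size_sort -!cardE card_J.
move=> k; rewrite !count_sorted_by (bigD1 b bB) (bigD1 t (setU11 _ _)) /=.
have -> : \sum_(i in t |: (B :\ b) | i != t) (k <= R i) =
          \sum_(i in B | i != b) (k <= R i).
  apply: eq_bigl => i; rewrite !inE.
  case: (i =P t) => [->|_] /=; first by rewrite (negbTE tB).
  by rewrite andbT andbC.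
apply: leq_add => //; case: (leqP k (R b)) => // le_kb.
by rewrite (leq_trans le_kb (ltnW lt_bt)).
Qed.

Local Open Scope ring_scope.

Lemma det_colsub_perm_eq0 (K : fieldType) (r n : nat) (X : 'M[K]_(r, n))
    (g : 'I_r -> 'I_n) (s : 'S_r) :
  (\det (colsub (g \o s) X) == 0) = (\det (colsub g X) == 0).
Proof.
rewrite colsub_comp -col_permEsub col_permE det_mulmx det_perm.
by rewrite mulf_eq0 signr_eq0 orbF.
Qed.

Lemma plucker_eq0 (K : fieldType) (r n : nat) (X : 'M[K]_(r, n))
    (J : {set 'I_n}) (h : 'I_r -> 'I_n) :
  #|J| = r -> injective h -> (forall i, h i \in J) ->
  (plucker X J == 0) = (\det (colsub h X) == 0).
Proof.
move=> card_J h_inj hJ; rewrite /plucker.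
case: (#|J| =P r) => [E|//].
pose g := fun i : 'I_r => @enum_val _ (mem J) (cast_ord (esym E) i).
pose s := fun i => cast_ord E (enum_rank_in (hJ i) (h i)).
have gs i : g (s i) = h i by rewrite /g /s cast_ordK enum_rankK_in.
have s_inj : injective s by move=> i j eq_s; apply: h_inj; rewrite -!gs eq_s.
have -> : colsub h X = colsub (g \o perm s_inj) X.
  by apply: eq_colsub => i /=; rewrite permE gs.
by rewrite det_colsub_perm_eq0.
Qed.

Lemma det_exchange_col (K : fieldType) (r n : nat) (Y : 'M[K]_(r, n))
    (fB : 'I_r -> 'I_n) (b : 'I_r) (t : 'I_n) :
  colsub fB Y = 1%:M ->
  \det (colsub (fun i => if i == b then t else fB i) Y) = Y b t.
Proof.
move=> Y_id.
have YfB i k : Y i (fB k) = (i == k)%:R.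
  by have := congr1 (fun M : 'M[K]_r => M i k) Y_id; rewrite !mxE.
rewrite (expand_det_col _ b) (bigD1 b) //= big1 ?addr0.
  rewrite /cofactor addnn -muln2 exprM sqrr_sign mul1r mxE eqxx.
  have -> : row' b (col' b (colsub (fun i => if i == b then t else fB i) Y))
            = 1%:M.
    apply/matrixP => x y; rewrite !mxE.
    by rewrite eq_sym (negbTE (neq_lift b y)) YfB (inj_eq (@lift_inj _ b)).
  by rewrite det1 mulr1.
move=> i neq_ib; rewrite /cofactor.
have [x def_i _] := unlift_some neq_ib.
rewrite (expand_det_row _ x) big1 ?mulr0 // => y _.
by rewrite !mxE -def_i eq_sym (negbTE (neq_lift b y)) YfB (negbTE (neq_lift b y)) mul0r.
Qed.

Section SchubertCellEchelon.

Variables (K : fieldType) (r n : nat) (X : 'M[K]_(r, n)).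
Variables (R : 'I_n -> nat) (B : {set 'I_n}).
Hypothesis card_B : #|B| = r.
Hypothesis plucker_B : plucker X B != 0.
Hypothesis plucker_above_B :
  forall J : {set 'I_n}, #|J| = r -> subset_lt R B J -> plucker X J = 0.

Definition pivot (i : 'I_r) : 'I_n := enum_val (cast_ord (esym card_B) i).

Lemma pivot_inj : injective pivot.
Proof. by move=> i j /enum_val_inj /cast_ord_inj. Qed.

Lemma pivot_in i : pivot i \in B.
Proof. exact: enum_valP. Qed.

Lemma pivot_onto x : x \in B -> exists i, pivot i = x.
Proof.
by move=> xB; exists (cast_ord card_B (enum_rank_in xB x));
  rewrite /pivot cast_ordK enum_rankK_in.
Qed.

Lemma pivot_minor_unit : colsub pivot X \in unitmx.
Proof. by rewrite unitmxE unitfE -(plucker_eq0 _ card_B pivot_inj pivot_in). Qed.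

Definition echelon : 'M[K]_(r, n) := invmx (colsub pivot X) *m X.

Lemma echelon_pivot : colsub pivot echelon = 1%:M.
Proof. by rewrite -mulmx_colsub mulVmx // pivot_minor_unit. Qed.

Lemma echelon_pivotE i k : echelon i (pivot k) = (i == k)%:R.
Proof. by have := congr1 (fun M : 'M[K]_r => M i k) echelon_pivot; rewrite !mxE. Qed.

Lemma echelon_eqmx : (echelon :=: X)%MS.
Proof.
apply/eqmxP/andP; split; first exact: submxMl.
by rewrite -{1}(mulKVmx pivot_minor_unit X) submxMl.
Qed.

Lemma echelon_vanish b t : t \notin B -> (R (pivot b) < R t)%N -> echelon b t = 0.
Proof.
move=> tB lt_bt; set h := fun i => if i == b then t else pivot i.
rewrite -(det_exchange_col b t echelon_pivot).
set J := t |: (B :\ pivot b).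
have card_J : #|J| = r by rewrite card_exchange ?pivot_in.
have h_inj : injective h.
  move=> i j; rewrite /h.
  case: (i =P b) => [->|_]; case: (j =P b) => [->|_] // eq_h;
    last exact: pivot_inj.
  - by move: tB; rewrite eq_h pivot_in.
  - by move: tB; rewrite -eq_h pivot_in.
have hJ i : h i \in J.
  rewrite /h !inE; case: (i =P b) => [_|neq_ib]; first by rewrite eqxx.
  by rewrite (inj_eq pivot_inj) pivot_in andbT; apply/orP; right; apply/eqP.
have := plucker_above_B card_J (exchange_gale_lt (pivot_in b) tB lt_bt).
move/eqP; rewrite (plucker_eq0 _ card_J h_inj hJ) /echelon -mulmx_colsub.
by rewrite det_mulmx => /eqP ->; rewrite mulr0.
Qed.

Lemma leading_vector s : s \in B ->
  exists v : 'rV[K]_n,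
    [/\ (v <= X)%MS, v 0 s = 1 & forall c, (R s < R c)%N -> v 0 c = 0].
Proof.
move=> sB; have [b <-] := pivot_onto sB.
exists (row b echelon); split; first by rewrite -echelon_eqmx row_sub.
  by rewrite mxE echelon_pivotE eqxx.
move=> c lt_bc; rewrite mxE.
have [cB|cNB] := boolP (c \in B); last exact: echelon_vanish.
move: lt_bc; have [k <-] := pivot_onto cB.
by rewrite echelon_pivotE; case: (b =P k) => [->|//]; rewrite ltnn.
Qed.

Lemma leading_column_in (R_inj : injective R) (w : 'rV[K]_n) (t : 'I_n) :
  (w <= X)%MS -> w 0 t != 0 -> (forall c, (R t < R c)%N -> w 0 c = 0) ->
  t \in B.
Proof.
move=> wX wt w_lead; apply/negPn/negP => tB.
have [y def_w] : exists y, w = y *m echelon by apply/submxP; rewrite echelon_eqmx.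
have wE k : w 0 (pivot k) = y 0 k.
  rewrite def_w mxE (bigD1 k) //= big1 ?addr0 => [|i neq_ik];
    by rewrite echelon_pivotE ?eqxx ?mulr1 // (negbTE neq_ik) mulr0.
have [b yb] : exists b, y 0 b * echelon b t != 0.
  apply/existsP; apply: contraR wt; rewrite negb_exists def_w mxE => /forallP H.
  by apply/eqP/big1 => i _; apply/eqP; have := H i; rewrite negbK.
have lt_bt : (R (pivot b) < R t)%N.
  rewrite ltn_neqAle; apply/andP; split.
    by apply/negP => /eqP /R_inj eq_bt; move: tB; rewrite -eq_bt pivot_in.
  rewrite leqNgt; apply/negP => /w_lead; rewrite wE => yb0.
  by move: yb; rewrite yb0 mul0r eqxx.
by move: yb; rewrite echelon_vanish // mulr0 eqxx.
Qed.

End SchubertCellEchelon.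

Lemma extremal_leading_term (K : fieldType) (m n : nat) (M : 'M[K]_(m, n))
    (Rs : 'I_m -> nat) (Rt : 'I_n -> nat) (i : 'I_m) (j : 'I_n) (v : 'rV[K]_m) :
  (forall i' j', M i' j' != 0 -> (i', j') <> (i, j) ->
     (Rs i < Rs i')%N \/ (Rt j' < Rt j)%N) ->
  v 0 i = 1 -> (forall k, (Rs i < Rs k)%N -> v 0 k = 0) ->
  (v *m M) 0 j = M i j /\ forall c, (Rt j < Rt c)%N -> (v *m M) 0 c = 0.
Proof.
move=> extremal_ij vi v_lead.
have term0 k c : (k, c) <> (i, j) -> (Rt j <= Rt c)%N -> v 0 k * M k c = 0.
  move=> neq_kc le_jc.
  have [vk0|vk] := eqVneq (v 0 k) 0; first by rewrite vk0 mul0r.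
  have [Mkc0|Mkc] := eqVneq (M k c) 0; first by rewrite Mkc0 mulr0.
  have le_ki : (Rs k <= Rs i)%N by rewrite leqNgt; apply: contra vk => /v_lead/eqP.
  by case: (extremal_ij k c Mkc neq_kc); lia.
split.
  rewrite mxE (bigD1 i) //= big1 ?addr0 ?vi ?mul1r // => k neq_ki.
  by apply: term0 => // -[/eqP]; rewrite (negbTE neq_ki).
move=> c lt_jc; rewrite mxE; apply: big1 => k _; apply: term0; last lia.
by case=> _ eq_cj; move: lt_jc; rewrite eq_cj ltnn.
Qed.

Theorem lemma3p1 (K : numClosedFieldType) (V A : finType) (src tgt : A -> V)
  (d : V -> nat) (Mat : forall a : A, 'M[K]_(d (src a), d (tgt a)))
  (rk : bvertices d -> nat) (rk_inj : injective rk)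
  (e : V -> nat) (beta : {set bvertices d}) :
  of_type e beta ->
  ~ ext_succ_closed Mat rk beta ->
  ~ (exists N : forall p : V, 'M[K]_(d p), in_cell Mat rk e beta N).
Proof.
move=> type_beta not_closed [N [[N_sub N_rank] N_cell]].
pose R p (i : 'I_(d p)) := rk (bvec i).
have R_inj p : injective (R p).
  by move=> x y /rk_inj; exact: (@eq_from_Tagged _ (fun q => 'I_(d q))).
have card_beta p : #|beta_at beta p| = \rank (N p) by rewrite type_beta N_rank.
have above_beta p (J : {set 'I_(d p)}) : #|J| = \rank (N p) ->
    subset_lt (R p) (beta_at beta p) J -> plucker (row_base (N p)) J = 0.
  by move=> card_J; apply: (proj2 (N_cell p)); rewrite card_J N_rank.
apply: not_closed => a i j [arrow_ij extremal_ij].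
have [iB|] := boolP (bvec i \in beta); last by left.
right; have i_beta : i \in beta_at beta (src a) by rewrite inE.
have [v [vN vi v_lead]] :=
  leading_vector (card_beta _) (proj1 (N_cell _)) (above_beta _) i_beta.
have [wj w_lead] := extremal_leading_term extremal_ij vi v_lead.
have wN : (v *m Mat a <= row_base (N (tgt a)))%MS.
  rewrite eq_row_base; apply: submx_trans (N_sub a).
  by apply: submxMr; rewrite -(eq_row_base (N (src a))).
have wj_neq0 : (v *m Mat a) 0 j != 0 by rewrite wj.
have := leading_column_in (card_beta _) (proj1 (N_cell _)) (above_beta _)
          (R_inj _) wN wj_neq0 w_lead.
by rewrite inE.
Qed.
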